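(* Let $G$ be an edge-colored graph of order $n\geq3$. If $e(G)+c(G)\geq\binom{n+1}{2}$ and $G$ contains exactly one rainbow triangle, then $e(G)+c(G)=\binom{n+1}{2}$ and $G$ is complete.
   Context: An edge-colored graph is a finite simple graph $G$ with a map $C:E(G)\to\mathbb{N}$. $e(G)=|E(G)|$, $c(G)$ is the number of distinct colors appearing on $E(G)$. A subgraph is rainbow if all its edges have distinct colors. *)

From mathcomp Require Import all_boot.
Set Implicit Arguments. Unset Strict Implicit. Unset Printing Implicit Defensive.

(* A finite simple graph on vertex type V : finType is given by its edge set
   E : {set {set V}}, every edge being a 2-element subset of V.
   An edge-coloring is a map C : {set V} -> nat (only its values on E matter). *)

Definition simple_graph (V : finType) (E : {set {set V}}) : Prop :=
  forall e, e \in E -> #|e| = 2.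

Definition num_edges (V : finType) (E : {set {set V}}) : nat := #|E|.

Definition num_colors (V : finType) (E : {set {set V}}) (C : {set V} -> nat) : nat :=
  size (undup [seq C e | e <- enum E]).

Definition edges_in (V : finType) (E : {set {set V}}) (S : {set V}) : {set {set V}} :=
  [set e in E | e \subset S].

Definition is_triangle (V : finType) (E : {set {set V}}) (S : {set V}) : bool :=
  (#|S| == 3) && [forall x in S, forall y in S, (x != y) ==> ([set x; y] \in E)].

Definition rainbow_triangle (V : finType) (E : {set {set V}}) (C : {set V} -> nat)
    (S : {set V}) : bool :=
  is_triangle E S && uniq [seq C e | e <- enum (edges_in E S)].

Definition rainbow_triangles (V : finType) (E : {set {set V}}) (C : {set V} -> nat)
    : {set {set V}} := [set S | rainbow_triangle E C S].

Definition complete_graph (V : finType) (E : {set {set V}}) : Prop :=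
  forall x y : V, x != y -> [set x; y] \in E.

From mathcomp Require Import all_boot finmap zify.
Set Implicit Arguments. Unset Strict Implicit. Unset Printing Implicit Defensive.

(* Bound for rainbow-free graphs: if G has no rainbow triangle then
   e(G) + c(G) < C(n+1, 2), and e(G) + c(G) < C(n+1, 2) - 1 unless G is complete.
   Induct on n by deleting a vertex u with deg u + p u <= n, where p u counts the
   colors seen only at u.  Such a u exists: if a vertex v maximising p has
   p v >= 2, the neighbours of v along its private colors are pairwise
   non-adjacent (an edge between two of them would close a rainbow triangle), so
   any one of them has degree at most n - p v.  Moreover p u <= 1 when G - u is
   complete.
   Now let xyz be the unique rainbow triangle.  If the color of xy appears on
   another edge, deleting xy leaves a rainbow-free, non-complete graph with the
   same colors, so e(G) + c(G) < C(n+1, 2).  Otherwise recoloring xy with the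
   color of xz kills xyz, creates no rainbow triangle and loses one color, so
   e(G) + c(G) <= C(n+1, 2), with strict inequality unless G is complete. *)

Lemma cards3P (T : finType) (A : {set T}) :
  reflect (exists a b c, [/\ a != b, a != c, b != c & A = [set a; b; c]])
          (#|A| == 3).
Proof.
apply: (iffP idP) => [A3 | [a [b [c [ab ac bc ->]]]]]; last first.
  by rewrite -setUA !cardsU1 cards1 !inE negb_or ab ac bc.
have /card_gt0P [a aA] : 0 < #|A| by rewrite (eqP A3).
have /cards2P [b [c [bc Abc]]] : #|A :\ a| == 2.
  by move: A3; rewrite (cardsD1 a) aA.
have : (b \in A :\ a) && (c \in A :\ a) by rewrite Abc !inE !eqxx orbT.
rewrite !inE => /andP [/andP [ba _] /andP [ca _]].
exists a, b, c; split; [by rewrite eq_sym | by rewrite eq_sym | done |].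
by rewrite -setUA -Abc setD1K.
Qed.

Lemma setD2_card3 (T : finType) (A : {set T}) x y :
  #|A| = 3 -> x \in A -> y \in A -> x != y ->
  exists2 w, w \notin [set x; y] & A = [set x; y; w].
Proof.
move=> A3 xA yA xy; have sxyA : [set x; y] \subset A.
  by apply/subsetP => v; rewrite !inE => /orP [] /eqP ->.
have /cards1P [w Aw] : #|A :\: [set x; y]| == 1.
  by rewrite cardsD (setIidPr sxyA) A3 cards2 xy.
exists w; first by have := set11 w; rewrite -Aw inE => /andP [].
by rewrite -Aw -{1}(setID A [set x; y]) (setIidPr sxyA).
Qed.

Lemma set2_neq (T : finType) (x y z : T) :
  z != x -> z != y -> [set x; y] != [set x; z].
Proof.
move=> zx zy; apply: contraNneq (_ : z \notin [set x; y]) => [->|].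
  by rewrite !inE eqxx orbT.
by rewrite !inE negb_or zx zy.
Qed.

Lemma eq_rainbow_triangle (V : finType) (E : {set {set V}}) (C1 C2 : {set V} -> nat) T :
  {in edges_in E T, C1 =1 C2} -> rainbow_triangle E C1 T = rainbow_triangle E C2 T.
Proof.
move=> eqC; rewrite /rainbow_triangle; congr (_ && uniq _).
by apply/eq_in_map => e; rewrite mem_enum; apply: eqC.
Qed.

Section SimpleGraph.

Variables (V : finType) (E : {set {set V}}).
Hypothesis simpleE : simple_graph E.

Lemma edge_neq a b : [set a; b] \in E -> a != b.
Proof. by move/simpleE; apply: contraPneq => ->; rewrite setUid cards1. Qed.

Lemma edgeP e u : e \in E -> u \in e -> exists2 w, w != u & e = [set u; w].
Proof.
move/simpleE/eqP/cards2P => [p [q [pq ->]]]; rewrite !inE => /orP [] /eqP ->.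
  by exists q; rewrite // eq_sym.
by exists p; rewrite // setUC.
Qed.

Lemma edges_in_set3 a b c :
  [set a; b] \in E -> [set a; c] \in E -> [set b; c] \in E ->
  edges_in E [set a; b; c] = [set [set a; b]; [set a; c]; [set b; c]].
Proof.
move=> Eab Eac Ebc; apply/setP => e; rewrite inE; apply/andP/idP => [[eE] | ].
  have [p [q [pq ->]]] := cards2P _ (introT eqP (simpleE eE)).
  rewrite !subUset !sub1set !inE => /andP [].
  move: pq => /[swap] /orP [/orP [] | ] /eqP -> /[swap] /orP [/orP [] | ] /eqP ->;
    rewrite ?eqxx ?orbT // => _;
    by rewrite ?[[set b; a]]setUC ?[[set c; a]]setUC ?[[set c; b]]setUC ?eqxx ?orbT.
rewrite !inE -orbA => /or3P [] /eqP ->; split => //;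
  by rewrite !subUset !sub1set !inE !eqxx ?orbT.
Qed.

Lemma is_triangle3 a b c : a != b -> a != c -> b != c ->
  is_triangle E [set a; b; c] =
  [&& [set a; b] \in E, [set a; c] \in E & [set b; c] \in E].
Proof.
move=> ab ac bc; rewrite /is_triangle.
have -> : #|[set a; b; c]| == 3 by apply/cards3P; exists a, b, c.
apply/forall_inP/and3P => [H | [Eab Eac Ebc] x xT].
  have pairE p q : p \in [set a; b; c] -> q \in [set a; b; c] -> p != q ->
      [set p; q] \in E.
    by move=> pT qT; move/forall_inP: (H p pT) => /(_ q qT) /implyP.
  by split; apply: pairE; rewrite ?inE ?eqxx ?orbT.
apply/forall_inP => y yT; apply/implyP.
move: xT yT; rewrite !inE => /orP [/orP [] | ] /eqP -> /orP [/orP [] | ] /eqP ->;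
  by rewrite ?eqxx // => _; rewrite setUC.
Qed.

Lemma rainbow_triangle3 C a b c : a != b -> a != c -> b != c ->
  rainbow_triangle E C [set a; b; c] =
  [&& [set a; b] \in E, [set a; c] \in E, [set b; c] \in E,
      C [set a; b] != C [set a; c], C [set a; b] != C [set b; c]
    & C [set a; c] != C [set b; c]].
Proof.
move=> ab ac bc; rewrite /rainbow_triangle is_triangle3 // -!andbA.
case Eab: ([set a; b] \in E); case Eac: ([set a; c] \in E);
  case Ebc: ([set b; c] \in E) => //=.
have ab_ac : [set a; b] != [set a; c] by rewrite set2_neq // eq_sym.
have ab_bc : [set a; b] != [set b; c] by rewrite setUC set2_neq // eq_sym.
have ac_bc : [set a; c] != [set b; c].
  by rewrite setUC [[set b; c]]setUC set2_neq // eq_sym.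
have pairs_uniq : uniq [:: [set a; b]; [set a; c]; [set b; c]].
  by rewrite /= !inE !negb_or ab_ac ab_bc ac_bc.
have pairsE : enum (edges_in E [set a; b; c]) =i [:: [set a; b]; [set a; c]; [set b; c]].
  by move=> e; rewrite mem_enum edges_in_set3 // !inE orbA.
rewrite (perm_uniq (perm_map C (uniq_perm (enum_uniq _) pairs_uniq pairsE))) /=.
by rewrite !inE !negb_or andbT andbA.
Qed.

End SimpleGraph.

Lemma rainbow_triangle_subgraph (V : finType) (E F : {set {set V}}) C T :
  simple_graph E -> F \subset E -> rainbow_triangle F C T -> rainbow_triangle E C T.
Proof.
move=> simpleE sFE RT; have simpleF : simple_graph F.
  by move=> e /(subsetP sFE); apply: simpleE.
case/andP: (RT) => /andP [/cards3P [a [b [c [ab ac bc Tabc]]]] _] _.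
move: RT; rewrite Tabc !rainbow_triangle3 // => /and4P [Eab Eac Ebc ->].
by rewrite !(subsetP sFE).
Qed.

Definition colors (V : finType) (C : {set V} -> nat) (F : {set {set V}}) : {fset nat} :=
  [fset C e | e in F]%fset.

Section Colors.

Variables (V : finType) (C : {set V} -> nat).
Implicit Types F : {set {set V}}.

Lemma colorsP F i : reflect (exists2 e, e \in F & C e = i) (i \in colors C F).
Proof. by apply: (iffP (imfsetP _ _ _ _)) => -[e eF Ce]; exists e. Qed.

Lemma num_colorsE F : num_colors F C = #|` colors C F|.
Proof.
rewrite /num_colors -card_fseq; congr #|` _|; apply/fsetP => i.
rewrite in_fset; apply/mapP/colorsP => -[e]; rewrite ?mem_enum => eF Ce.
  by exists e; rewrite ?mem_enum.
by exists e; rewrite ?mem_enum.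
Qed.

Lemma colorsS F1 F2 : F1 \subset F2 -> (colors C F1 `<=` colors C F2)%fset.
Proof.
move=> sF12; apply/fsubsetP => i /colorsP [e eF <-].
by apply/colorsP; exists e; rewrite ?(subsetP sF12).
Qed.

Lemma card_colors_le F : #|` colors C F| <= #|F|.
Proof. by rewrite cardE; apply: leq_imfset_card. Qed.

End Colors.

Definition nbhd (V : finType) (E : {set {set V}}) (S : {set V}) (u : V) : {set V} :=
  [set w in S | [set u; w] \in E].

Definition private_colors (V : finType) (E : {set {set V}}) (C : {set V} -> nat)
    (S : {set V}) (u : V) : {fset nat} :=
  (colors C (edges_in E S) `\` colors C (edges_in E (S :\ u)))%fset.

Definition clique (V : finType) (E : {set {set V}}) (S : {set V}) : bool :=
  [forall x in S, forall y in S, (x != y) ==> ([set x; y] \in E)].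

Definition rainbow_free (V : finType) (E : {set {set V}}) (C : {set V} -> nat)
    (S : {set V}) : Prop :=
  forall T : {set V}, T \subset S -> ~~ rainbow_triangle E C T.

Section RainbowFreeBound.

Variables (V : finType) (E : {set {set V}}) (C : {set V} -> nat).
Implicit Types (S : {set V}) (u v : V).

Lemma cliqueP S :
  reflect {in S &, forall x y, x != y -> [set x; y] \in E} (clique E S).
Proof.
apply: (iffP forall_inP) => [H x y xS yS | H x xS].
  by move/forall_inP: (H x xS) => /(_ y yS) /implyP.
by apply/forall_inP => y yS; apply/implyP; apply: H.
Qed.

Hypothesis simpleE : simple_graph E.

Lemma nbhd_sub S u : nbhd E S u \subset S :\ u.
Proof.
apply/subsetP => w; rewrite !inE => /andP [-> /(edge_neq simpleE)].
by rewrite eq_sym => ->.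
Qed.

Lemma edges_in_setD1 S u e :
  e \in edges_in E S -> u \notin e -> e \in edges_in E (S :\ u).
Proof.
rewrite !inE => /andP [-> eS] ue; apply/subsetP => x xe.
by rewrite !inE (subsetP eS) // andbT; apply: contraNneq ue => <-.
Qed.

Lemma card_edges_in_setD1 S u : u \in S ->
  #|edges_in E S| <= #|edges_in E (S :\ u)| + #|nbhd E S u|.
Proof.
move=> uS; have := leq_imset_card (fun w => [set u; w]) (nbhd E S u).
move/(leq_add (leqnn #|edges_in E (S :\ u)|)); apply: leq_trans.
apply: leq_trans (leq_card_setU _ _); apply/subset_leq_card/subsetP => e eS.
rewrite inE; case/boolP: (u \in e) => [ue | /(edges_in_setD1 eS) -> //].
move: eS; rewrite inE => /andP [eE eS]; have [w _ ew] := edgeP simpleE eE ue.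
apply/orP; right; apply/imsetP; exists w => //.
by rewrite inE -ew eE (subsetP eS) // ew !inE eqxx orbT.
Qed.

Lemma card_colors_setD1 S u :
  #|` colors C (edges_in E S)| =
  #|` colors C (edges_in E (S :\ u))| + #|` private_colors E C S u|.
Proof.
have sub : (colors C (edges_in E (S :\ u)) `<=` colors C (edges_in E S))%fset.
  apply/colorsS/subsetP => e; rewrite !inE => /andP [-> /subset_trans]; apply.
  exact: subsetDl.
by rewrite -(cardfsID (colors C (edges_in E (S :\ u)))) (fsetIidPr sub).
Qed.

Lemma private_colorP S u i : i \in private_colors E C S u ->
  exists2 w, w \in nbhd E S u & C [set u; w] = i.
Proof.
rewrite /private_colors in_fsetD => /andP [iN /colorsP [e eS Ce]].
case/boolP: (u \in e) => [ue | nue]; last first.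
  by case/negP: iN; apply/colorsP; exists e => //; apply: edges_in_setD1.
move: eS; rewrite inE => /andP [eE eS]; have [w _ ew] := edgeP simpleE eE ue.
exists w; last by rewrite -ew.
by rewrite inE -ew eE (subsetP eS) // ew !inE eqxx orbT.
Qed.

Lemma private_nbhd_nonadjacent S v a b :
  rainbow_free E C S -> v \in S -> a \in nbhd E S v -> b \in nbhd E S v ->
  C [set v; a] \in private_colors E C S v -> C [set v; b] \in private_colors E C S v ->
  C [set v; a] != C [set v; b] -> [set a; b] \notin E.
Proof.
move=> rfS vS; rewrite !inE => /andP [aS Eva] /andP [bS Evb].
move=> /andP [Pa _] /andP [Pb _] Cab; apply/negP => Eab.
have ab : a != b by apply: contraNneq Cab => ->.
have va := edge_neq simpleE Eva; have vb := edge_neq simpleE Evb.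
have old : C [set a; b] \in colors C (edges_in E (S :\ v)).
  apply/colorsP; exists [set a; b] => //.
  by rewrite inE Eab subUset !sub1set !inE aS bS ![_ == v]eq_sym va vb.
have vabS : [set v; a; b] \subset S by rewrite !subUset !sub1set vS aS bS.
move/negP: (rfS _ vabS); apply.
rewrite rainbow_triangle3 // Eva Evb Eab Cab /=.
by apply/andP; split; [apply: contraNneq Pa | apply: contraNneq Pb] => ->.
Qed.

Lemma private_colors_le1 S u : rainbow_free E C S -> u \in S -> clique E (S :\ u) ->
  #|` private_colors E C S u| <= 1.
Proof.
move=> rfS uS /cliqueP clS; rewrite leqNgt; apply/negP => P_gt1.
have [i Pi] : exists i, i \in private_colors E C S u.
  by apply/fset0Pn; rewrite -cardfs_gt0; apply: ltnW.
have [j] : exists j, j \in (private_colors E C S u `\ i)%fset.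
  by apply/fset0Pn; rewrite -cardfs_gt0; move: P_gt1; rewrite (cardfsD1 i) Pi add1n ltnS.
rewrite in_fsetD1 => /andP [ji Pj].
have [a nba Ca] := private_colorP Pi; have [b nbb Cb] := private_colorP Pj.
have [aS bS] := (subsetP (nbhd_sub S u) a nba, subsetP (nbhd_sub S u) b nbb).
have ab : a != b by apply/eqP => ab; move/eqP: ji; apply; rewrite -Cb -ab Ca.
apply: (negP (private_nbhd_nonadjacent rfS uS nba nbb _ _ _)); rewrite ?Ca ?Cb //.
  by rewrite eq_sym.
exact: clS.
Qed.

Lemma exists_light_vertex S : rainbow_free E C S -> 0 < #|S| ->
  exists2 u, u \in S & #|nbhd E S u| + #|` private_colors E C S u| <= #|S|.
Proof.
move=> rfS /card_gt0P [v0 v0S].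
have [v vS vmax] := arg_maxnP (fun v => #|` private_colors E C S v|) v0S.
have cardS u : u \in S -> #|S| = #|S :\ u|.+1 by rewrite (cardsD1 u S) => ->.
case: (leqP #|` private_colors E C S v| 1) => [P_le1 | P_gt1].
  exists v => //; have := subset_leq_card (nbhd_sub S v).
  by rewrite (cardS v vS); lia.
have [i0 Pi0] : exists i0, i0 \in private_colors E C S v.
  by apply/fset0Pn; rewrite -cardfs_gt0; apply: ltnW.
have [u nbu Cu] := private_colorP Pi0.
have uS : u \in S by move: nbu; rewrite inE => /andP [].
exists u => //.
set A := [set w in nbhd E S v |
  (C [set v; w] \in private_colors E C S v) && (C [set v; w] != i0)].
have A_large : #|` private_colors E C S v| <= #|A|.+1.
  have sub : (private_colors E C S v `\ i0 `<=` [fset C [set v; w] | w in A])%fset.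
    apply/fsubsetP => i; rewrite in_fsetD1 => /andP [ii0 Pi].
    have [w nbw Cw] := private_colorP Pi.
    by apply/imfsetP; exists w; rewrite //= inE nbw Cw Pi.
  rewrite (cardfsD1 i0) Pi0 add1n ltnS.
  by apply: leq_trans (fsubset_leq_card sub) _; rewrite cardE; apply: leq_imfset_card.
have A_sub : A \subset S :\ u.
  apply/subsetP => w; rewrite inE => /and3P [nbw _ wi0].
  rewrite !inE andbC; move: nbw; rewrite inE => /andP [-> _] /=.
  by apply: contraNneq wi0 => ->; rewrite Cu.
have nbhd_u : nbhd E S u \subset (S :\ u) :\: A.
  apply/subsetP => w nbuw; rewrite inE (subsetP (nbhd_sub S u) _ nbuw) andbT.
  apply/negP; rewrite inE => /and3P [nbvw Pw wi0].
  have Cuw : C [set v; u] != C [set v; w] by rewrite Cu eq_sym.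
  move: nbuw; rewrite inE => /andP [_]; apply/negP.
  by apply: (private_nbhd_nonadjacent rfS vS nbu nbvw) Pw Cuw; rewrite Cu.
have := subset_leq_card nbhd_u; rewrite cardsD (setIidPr A_sub).
have := vmax u uS; have := cardS u uS; have := subset_leq_card A_sub.
lia.
Qed.

Lemma clique_setD1 S u : u \in S -> S :\ u \subset nbhd E S u ->
  clique E (S :\ u) -> clique E S.
Proof.
move=> uS sub /cliqueP clS; apply/cliqueP => x y xS yS xy.
have nbhdE w : w \in S -> w != u -> [set u; w] \in E.
  move=> wS wu; have := subsetP sub w; rewrite !inE wu wS => /(_ isT).
  by case/andP.
case: (eqVneq x u) xy => [-> | xu] xy; first by apply: nbhdE; rewrite // eq_sym.
case: (eqVneq y u) xy => [-> | yu] xy; first by rewrite setUC nbhdE.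
by apply: clS; rewrite // !inE ?xu ?yu.
Qed.

Lemma rainbow_free_bound n S : #|S| = n.+1 -> rainbow_free E C S ->
  #|edges_in E S| + #|` colors C (edges_in E S)| + ~~ clique E S < 'C(n.+2, 2).
Proof.
elim: n S => [|n IH] S cS rfS.
  have [v ->] : exists v, S = [set v] by apply/cards1P; rewrite cS.
  have -> : edges_in E [set v] = set0.
    apply/setP => e; rewrite !inE; apply/negbTE/andP => -[eE /subset_leq_card].
    by rewrite simpleE // cards1.
  have -> : clique E [set v].
    by apply/cliqueP => x y; rewrite !inE => /eqP -> /eqP ->; rewrite eqxx.
  by have := card_colors_le C (set0 : {set {set V}}); rewrite cards0 leqn0 => /eqP ->.
have /(exists_light_vertex rfS) [u uS light] : 0 < #|S| by rewrite cS.
have cS' : #|S :\ u| = n.+1 by move: cS; rewrite (cardsD1 u) uS => -[].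
have rfS' : rainbow_free E C (S :\ u).
  by move=> T sT; apply: rfS (subset_trans sT (subsetDl _ _)).
have binE : 'C(n.+3, 2) = 'C(n.+2, 2) + n.+2 by rewrite binS bin1.
have := private_colors_le1 rfS uS; have := IH _ cS' rfS'.
have := card_edges_in_setD1 uS; have := subset_leq_card (nbhd_sub S u).
move: light; rewrite (card_colors_setD1 S u) binE cS cS'.
case cl' : (clique E (S :\ u)); last by case: (clique E S) => /=; lia.
case: (ltnP #|nbhd E S u| n.+1) => [nb_lt | nb_ge].
  by case: (clique E S) => /=; lia.
suff -> : clique E S by lia.
apply: clique_setD1 uS _ cl'.
by have /eqP -> : nbhd E S u == S :\ u by rewrite eqEcard nbhd_sub cS' nb_ge.
Qed.

Lemma rainbow_free_graph_bound : (forall T, ~~ rainbow_triangle E C T) -> 0 < #|V| ->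
  num_edges E + num_colors E C + ~~ clique E setT < 'C(#|V|.+1, 2).
Proof.
move=> rf V_gt0; have cT : #|[set: V]| = #|V|.-1.+1 by rewrite cardsT prednK.
have := rainbow_free_bound cT (fun T _ => rf T).
have -> : edges_in E setT = E by apply/setP => e; rewrite inE subsetT andbT.
by rewrite num_colorsE prednK.
Qed.

End RainbowFreeBound.

Lemma completeP (V : finType) (E : {set {set V}}) :
  reflect (complete_graph E) (clique E setT).
Proof.
apply: (iffP (cliqueP _ _)) => [cl x y | cl x y _ _]; last exact: cl.
by apply: cl; rewrite inE.
Qed.

Definition recolor (V : finType) (C : {set V} -> nat) (f g : {set V}) : {set V} -> nat :=
  fun e => if e == f then C g else C e.

Lemma colors_recolor (V : finType) (E : {set {set V}}) C f g :
  g \in E -> g != f -> (forall e, e \in E -> e != f -> C e != C f) ->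
  colors (recolor C f g) E = (colors C E `\ C f)%fset.
Proof.
move=> gE gf unique_f; apply/fsetP => i; rewrite in_fsetD1.
apply/colorsP/andP => [[e eE <-] | [if_ /colorsP [e eE Ce]]].
  rewrite /recolor; case: (eqVneq e f) => [_ | ef].
    by split; [exact: unique_f gE gf | apply/colorsP; exists g].
  by split; [exact: unique_f eE ef | apply/colorsP; exists e].
exists e => //; rewrite /recolor; case: (eqVneq e f) => [ef | //].
by move: if_; rewrite -Ce ef eqxx.
Qed.

Section UniqueRainbowTriangle.

Variables (V : finType) (E : {set {set V}}) (C : {set V} -> nat) (x y z : V).
Hypotheses (simpleE : simple_graph E) (xy : x != y) (xz : x != z) (yz : y != z).
Hypothesis rainbowE : rainbow_triangles E C = [set [set x; y; z]].

Lemma rainbow_triangleE T : rainbow_triangle E C T = (T == [set x; y; z]).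
Proof. by rewrite -in_set1 -rainbowE inE. Qed.

Lemma rainbow_xyz :
  [&& [set x; y] \in E, [set x; z] \in E, [set y; z] \in E,
      C [set x; y] != C [set x; z], C [set x; y] != C [set y; z]
    & C [set x; z] != C [set y; z]].
Proof. by rewrite -rainbow_triangle3 // rainbow_triangleE. Qed.

Lemma shared_color_bound e : e \in E -> e != [set x; y] -> C e = C [set x; y] ->
  num_edges E + num_colors E C < 'C(#|V|.+1, 2).
Proof.
move=> eE exy Ce; case/and3P: rainbow_xyz => Exy _ _.
set F := E :\ [set x; y].
have sFE : F \subset E by apply: subsetDl.
have simpleF : simple_graph F by move=> g /(subsetP sFE); apply: simpleE.
have rfF T : ~~ rainbow_triangle F C T.
  apply/negP => RT; have := rainbow_triangle_subgraph simpleE sFE RT.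
  rewrite rainbow_triangleE => /eqP TE.
  by move: RT; rewrite TE rainbow_triangle3 // !inE eqxx.
have colorsF : colors C F = colors C E.
  apply/fsetP => i; apply/colorsP/colorsP => -[g gE <-].
    by exists g; rewrite // (subsetP sFE).
  case: (eqVneq g [set x; y]) => [-> | gxy]; first by exists e; rewrite // !inE exy.
  by exists g; rewrite // !inE gxy.
have incompleteF : ~~ clique F setT.
  by apply/negP => /cliqueP /(_ x y); rewrite !inE eqxx /= => /(_ isT isT xy).
have V_gt0 : 0 < #|V| by apply/card_gt0P; exists x.
have := rainbow_free_graph_bound simpleF rfF V_gt0.
have edgesF : num_edges E = (num_edges F).+1.
  by rewrite /num_edges (cardsD1 [set x; y] E) Exy.
by rewrite edgesF !num_colorsE colorsF incompleteF /=; lia.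
Qed.

Hypothesis unique_xy : forall e, e \in E -> e != [set x; y] -> C e != C [set x; y].

Lemma recolor_rainbow_free T : ~~ rainbow_triangle E (recolor C [set x; y] [set x; z]) T.
Proof.
set C' := recolor C [set x; y] [set x; z]; apply/negP => RT.
case/boolP: ([set x; y] \subset T) => [xyT | xyNT]; last first.
  have eqC : {in edges_in E T, C' =1 C}.
    move=> e; rewrite inE /C' /recolor => /andP [_ eT].
    by case: eqP => // exy; case/negP: xyNT; rewrite -exy.
  move: RT; rewrite (eq_rainbow_triangle eqC) rainbow_triangleE => /eqP TE.
  by case/negP: xyNT; rewrite TE subsetUl.
have T3 : #|T| = 3 by case/andP: RT => /andP [/eqP].
move: xyT; rewrite subUset !sub1set => /andP [xT yT].
have [w] := setD2_card3 T3 xT yT xy; rewrite !inE negb_or => /andP [wx wy] Tw.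
rewrite ![w == _]eq_sym in wx wy.
have xw_xy : [set x; w] != [set x; y] by rewrite set2_neq // eq_sym.
have yw_xy : [set y; w] != [set x; y] by rewrite [[set x; y]]setUC set2_neq // eq_sym.
move: RT; rewrite Tw rainbow_triangle3 // /C' /recolor eqxx (negbTE xw_xy) (negbTE yw_xy).
case/and5P => Exy Exw Eyw Cxz_xw /andP [_ Cxw_yw].
have wz : w != z by apply: contraNneq Cxz_xw => ->.
have : rainbow_triangle E C [set x; y; w].
  rewrite rainbow_triangle3 // Exy Exw Eyw Cxw_yw.
  by rewrite ![C [set x; y] == _]eq_sym !unique_xy.
rewrite rainbow_triangleE => /eqP/setP/(_ z).
by rewrite !inE eqxx ![z == _]eq_sym (negbTE xz) (negbTE yz) (negbTE wz).
Qed.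

Lemma unique_color_bound :
  num_edges E + num_colors E C + ~~ clique E setT <= 'C(#|V|.+1, 2).
Proof.
case/and4P: rainbow_xyz => Exy Exz _ /andP [Cxy_xz _].
have xz_xy : [set x; z] != [set x; y] by rewrite set2_neq // eq_sym.
have V_gt0 : 0 < #|V| by apply/card_gt0P; exists x.
have := rainbow_free_graph_bound simpleE recolor_rainbow_free V_gt0.
rewrite !num_colorsE colors_recolor // (cardfsD1 (C [set x; y]) (colors C E)).
have -> : C [set x; y] \in colors C E by apply/colorsP; exists [set x; y].
by rewrite add1n addnS.
Qed.

End UniqueRainbowTriangle.

Theorem lemma6 (V : finType) (E : {set {set V}}) (C : {set V} -> nat) :
  simple_graph E ->
  3 <= #|V| ->
  'C(#|V|.+1, 2) <= num_edges E + num_colors E C ->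
  #|rainbow_triangles E C| = 1 ->
  num_edges E + num_colors E C = 'C(#|V|.+1, 2) /\ complete_graph E.
Proof.
move=> simpleE _ lower one_rainbow.
have [T0 T0E] : exists T0, rainbow_triangles E C = [set T0].
  by apply/cards1P; rewrite one_rainbow.
have : T0 \in rainbow_triangles E C by rewrite T0E set11.
rewrite inE => /andP [/andP [/cards3P [x [y [z [xy xz yz T0xyz]]]] _] _].
rewrite T0xyz in T0E.
case: (boolP [exists e in E, (e != [set x; y]) && (C e == C [set x; y])]).
  case/exists_inP => e eE /andP [exy /eqP Ce].
  by have := shared_color_bound simpleE xy xz yz T0E eE exy Ce; rewrite ltnNge lower.
rewrite negb_exists_in => /forall_inP no_share.
have unique_xy e : e \in E -> e != [set x; y] -> C e != C [set x; y].
  by move=> eE exy; have := no_share e eE; rewrite exy.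
have := unique_color_bound simpleE xy xz yz T0E unique_xy.
case: (boolP (clique E setT)) => [/completeP complete | _] /= upper.
  by split => //; apply/eqP; rewrite eqn_leq lower -(addn0 (_ + _)) andbT.
by have := leq_trans upper lower; rewrite addn1 ltnn.
Qed.
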